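(* Let $K\ge2$, $P>0$ and $H_1\ge H_2\ge\cdots\ge H_K>0$. For $\boldsymbol\alpha=(\alpha_1,\dots,\alpha_K)$ with $0\le\alpha_k\le1$ and $\sum_{k=1}^K\alpha_k=1$ let $$r_k(\boldsymbol\alpha)=\log_2\Big(1+\frac{\alpha_k}{\sum_{i=1}^{k-1}\alpha_i+\frac{1}{PH_k}}\Big).$$ Then there exists a maximizer $\boldsymbol\alpha^\star$ of $\min_{k}r_k(\boldsymbol\alpha)$ over this set such that $r_1(\boldsymbol\alpha^\star)=r_2(\boldsymbol\alpha^\star)=\cdots=r_K(\boldsymbol\alpha^\star)=r_{\max}$, where $r_{\max}$ is the maximum value.
   Context: $K$-user downlink NOMA with superposition coding and successive interference cancellation: $\alpha_k$ is the fraction of total power $P$ given to Receiver $k$'s message, $H_k$ is its channel gain, and $r_k(\boldsymbol\alpha)$ is its achieved rate. *)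

From mathcomp Require Import all_boot all_order all_algebra.
From mathcomp Require Import all_classical all_reals all_analysis.
Set Implicit Arguments. Unset Strict Implicit. Unset Printing Implicit Defensive.
Import Order.TTheory GRing.Theory Num.Theory.
Local Open Scope ring_scope.

Definition log2 {R : realType} (x : R) : R := ln x / ln 2.

(* rate of receiver k (0-indexed: receiver k+1 in the paper);
   interference from the messages of receivers with index < k *)
Definition rate {R : realType} (K : nat) (P : R) (H : 'I_K -> R)
  (a : 'I_K -> R) (k : 'I_K) : R :=
  log2 (1 + a k / (\sum_(i < K | (i < k)%N) a i + 1 / (P * H k))).

Definition feasible {R : realType} (K : nat) (a : 'I_K -> R) : Prop :=
  (forall k, 0 <= a k <= 1) /\ \sum_(k < K) a k = 1.

Definition is_min_rate {R : realType} (K : nat) (P : R) (H : 'I_K -> R)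
  (a : 'I_K -> R) (m : R) : Prop :=
  (exists k, rate P H a k = m) /\ (forall k, m <= rate P H a k).

From mathcomp Require Import all_boot all_order all_algebra.
From mathcomp Require Import all_classical all_reals all_analysis.
From mathcomp Require Import lra.
Set Implicit Arguments. Unset Strict Implicit. Unset Printing Implicit Defensive.
Import Order.TTheory GRing.Theory Num.Theory.
Import numFieldNormedType.Exports.
Local Open Scope ring_scope.

(* Every receiver gets rate log2 (1 + t) exactly when
   alpha_k = t (alpha_1 + ... + alpha_(k-1) + c_k), with c_k = 1/(P H_k).
   This recursion determines partial sums s_t(n) that are continuous in t,
   vanish at t = 0 and are at least 1 at t = 1/c_1, so by the intermediate value
   theorem some t >= 0 spends exactly the total power.  Conversely, if a
   feasible allocation had all rates above log2 (1 + t), each alpha_k would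
   exceed t (alpha_1 + ... + alpha_(k-1) + c_k), and by induction its partial
   sums would strictly dominate s_t, so its total power would exceed
   s_t(K) = 1. *)

Section EqualRatePartialSums.
Variables (R : realType) (c : nat -> R).
Hypothesis c_gt0 : forall n, 0 < c n.

Fixpoint eqrate_psum (t : R) (n : nat) : R :=
  if n is n'.+1 then eqrate_psum t n' + t * (eqrate_psum t n' + c n') else 0.

Definition eqrate_alloc (t : R) (n : nat) : R := t * (eqrate_psum t n + c n).

Lemma eqrate_psumS (t : R) n :
  eqrate_psum t n.+1 = eqrate_psum t n + eqrate_alloc t n.
Proof. by []. Qed.

Lemma eqrate_psumE (t : R) n : eqrate_psum t n = \sum_(i < n) eqrate_alloc t i.
Proof. by elim: n => [|n IH]; rewrite ?big_ord0 // big_ord_recr -IH. Qed.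

Lemma eqrate_psum_ge0 (t : R) n : 0 <= t -> 0 <= eqrate_psum t n.
Proof.
move=> t_ge0; elim: n => //= n IH.
by rewrite addr_ge0 // mulr_ge0 // addr_ge0 // ltW.
Qed.

Lemma eqrate_alloc_ge0 (t : R) n : 0 <= t -> 0 <= eqrate_alloc t n.
Proof. by move=> t_ge0; rewrite mulr_ge0 // addr_ge0 ?eqrate_psum_ge0 // ltW. Qed.

Lemma eqrate_psum_le (t : R) m n :
  0 <= t -> (m <= n)%N -> eqrate_psum t m <= eqrate_psum t n.
Proof.
move=> t_ge0; move: m n; apply/nondecreasing_seqP => n /=.
by rewrite lerDl; exact: eqrate_alloc_ge0.
Qed.

Lemma eqrate_alloc_le_psum (t : R) m n :
  0 <= t -> (m < n)%N -> eqrate_alloc t m <= eqrate_psum t n.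
Proof.
move=> t_ge0 lt_mn; apply: le_trans _ (eqrate_psum_le t_ge0 lt_mn).
by rewrite /= lerDr eqrate_psum_ge0.
Qed.

Lemma eqrate_psum0 n : eqrate_psum 0 n = 0.
Proof. by elim: n => //= n ->; rewrite mul0r addr0. Qed.

Lemma eqrate_psum_continuous n : continuous (fun t : R => eqrate_psum t n).
Proof.
elim: n => [|n IH] /= t; first exact: cst_continuous.
apply: (continuousD (IH t)).
apply: (@continuousM _ _ id); first exact: cvg_id.
by apply: (continuousD (IH t)); exact: cst_continuous.
Qed.

Lemma eqrate_level_exists n : exists2 t, 0 <= t & eqrate_psum t n.+1 = 1.
Proof.
have c0V_ge0 : 0 <= (c 0)^-1 by rewrite invr_ge0 ltW.
have psum_ge1 : 1 <= eqrate_psum (c 0)^-1 n.+1.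
  apply: le_trans _ (eqrate_psum_le c0V_ge0 (ltn0Sn n)).
  by rewrite /= !add0r mulVf // gt_eqF.
have [t t_in psum1] : exists2 t, t \in `[0, (c 0)^-1] & eqrate_psum t n.+1 = 1.
  apply: IVT => //; first exact/continuous_subspaceT/eqrate_psum_continuous.
  rewrite eqrate_psum0 min_l ?max_r ?ler01 //; exact: le_trans ler01 psum_ge1.
by exists t => //; move: t_in; rewrite in_itv /= => /andP[].
Qed.

Lemma eqrate_psum_lt_sum (t : R) (b : nat -> R) n : 0 <= t ->
    (forall k, (k <= n)%N -> t * (\sum_(i < k) b i + c k) < b k) ->
  eqrate_psum t n.+1 < \sum_(i < n.+1) b i.
Proof.
move=> t_ge0; elim: n => [|n IH] b_gt.
  by have := b_gt 0%N isT; rewrite /= !big_ord_recr !big_ord0 /= !add0r.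
have /ltW psum_le := IH (fun k le_kn => b_gt k (leqW le_kn)).
rewrite eqrate_psumS big_ord_recr [X in _ < X]/=.
have := b_gt n.+1 (leqnn _).
have : eqrate_alloc t n.+1 <= t * (\sum_(i < n.+1) b i + c n.+1).
  by rewrite ler_wpM2l // lerD2r.
lra.
Qed.

End EqualRatePartialSums.

Lemma log2_ltr (R : realType) : {in Num.pos &, {mono @log2 R : x y / x < y}}.
Proof.
move=> x y x_gt0 y_gt0.
by rewrite /log2 ltr_pM2r ?ltr_ln // invr_gt0 ln_gt0 // ltr1n.
Qed.

Lemma log2_lt_rate_threshold (R : realType) (t x D : R) :
  0 <= t -> 0 <= x -> 0 < D -> log2 (1 + t) < log2 (1 + x / D) -> t * D < x.
Proof.
move=> t_ge0 x_ge0 D_gt0; have xD_ge0 : 0 <= x / D by rewrite divr_ge0 // ltW.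
by rewrite log2_ltr ?posrE ?ltrD2l ?ltr_pdivlMr // 1?mulrC //; lra.
Qed.

(* Indexed by nat for the recursion; indices beyond K are junk (inord maps
   them to 0) and never used. *)
Definition scaled_noise (R : realType) (K : nat) (P : R) (H : 'I_K.+1 -> R)
    (n : nat) : R :=
  1 / (P * H (inord n)).

Section EqualRateAllocation.
Variables (R : realType) (K : nat) (P : R) (H : 'I_K.+1 -> R).
Hypotheses (P_gt0 : 0 < P) (H_gt0 : forall k, 0 < H k).

Local Notation c := (scaled_noise P H).

Lemma scaled_noise_gt0 n : 0 < c n.
Proof. by rewrite divr_gt0 // mulr_gt0. Qed.

Lemma scaled_noiseE (k : 'I_K.+1) : c k = 1 / (P * H k).
Proof. by rewrite /scaled_noise inord_val. Qed.

Lemma sum_ord_prefix (F : nat -> R) (k : 'I_K.+1) :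
  \sum_(i < K.+1 | (i < k)%N) F i = \sum_(i < k) F i.
Proof. by rewrite (big_ord_widen K.+1 F (ltnW (ltn_ord k))). Qed.

Lemma rate_eqrate_alloc (t : R) k : 0 <= t ->
  rate P H (fun j => eqrate_alloc c t j) k = log2 (1 + t).
Proof.
move=> t_ge0; rewrite /rate (sum_ord_prefix (eqrate_alloc c t)).
rewrite -eqrate_psumE -scaled_noiseE /eqrate_alloc mulfK // gt_eqF //.
exact: ltr_wpDl (eqrate_psum_ge0 scaled_noise_gt0 _ t_ge0) (scaled_noise_gt0 k).
Qed.

Lemma eqrate_alloc_feasible (t : R) : 0 <= t -> eqrate_psum c t K.+1 = 1 ->
  feasible (fun k : 'I_K.+1 => eqrate_alloc c t k).
Proof.
move=> t_ge0 psum1; split; last by rewrite -psum1 eqrate_psumE.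
move=> k; rewrite (eqrate_alloc_ge0 scaled_noise_gt0) //= -psum1.
exact: (eqrate_alloc_le_psum scaled_noise_gt0 t_ge0 (ltn_ord k)).
Qed.

Lemma min_rate_le_eqrate (t : R) b m : 0 <= t -> eqrate_psum c t K.+1 = 1 ->
  feasible b -> is_min_rate P H b m -> m <= log2 (1 + t).
Proof.
move=> t_ge0 psum1 [b01 sum_b] [_ m_le]; rewrite leNgt; apply/negP => lt_m.
have b_inord : forall (F : 'I_K.+1 -> bool),
    \sum_(i < K.+1 | F i) b i = \sum_(i < K.+1 | F i) b (inord i).
  by move=> F; apply: eq_bigr => i _; rewrite inord_val.
have b_gt k : (k <= K)%N ->
    t * (\sum_(i < k) b (inord i) + c k) < b (inord k).
  move=> le_kK; have := lt_le_trans lt_m (m_le (inord k)).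
  rewrite /rate b_inord (sum_ord_prefix (fun i => b (inord i))) inordK //.
  have sum_ge0 : 0 <= \sum_(i < k) b (inord i).
    by apply: sumr_ge0 => i _; case/andP: (b01 (inord i)).
  apply: log2_lt_rate_threshold => //; first by case/andP: (b01 (inord k)).
  by rewrite ltr_wpDl ?scaled_noise_gt0.
have := eqrate_psum_lt_sum t_ge0 b_gt.
by rewrite psum1 -(b_inord xpredT) sum_b ltxx.
Qed.

End EqualRateAllocation.

Theorem lemma5 (R : realType) (K : nat) (P : R) (H : 'I_K -> R) :
  (2 <= K)%N -> 0 < P ->
  (forall i j : 'I_K, (i <= j)%N -> H j <= H i) ->
  (forall k, 0 < H k) ->
  exists (astar : 'I_K -> R) (rmax : R),
    feasible astar /\
    is_min_rate P H astar rmax /\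
    (forall b : 'I_K -> R, feasible b ->
       forall m, is_min_rate P H b m -> m <= rmax) /\
    (forall k, rate P H astar k = rmax).
Proof.
case: K H => [|K] H // _ P_gt0 _ H_gt0.
have [t t_ge0 psum1] := eqrate_level_exists (scaled_noise_gt0 P_gt0 H_gt0) K.
have rateE := rate_eqrate_alloc P_gt0 H_gt0 _ t_ge0.
exists (fun k => eqrate_alloc (scaled_noise P H) t k), (log2 (1 + t)).
split; first exact: eqrate_alloc_feasible.
split; first by split; [exists ord0 | move=> k]; rewrite rateE.
split; last exact: rateE.
by move=> b b_feas m; exact: min_rate_le_eqrate.
Qed.
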